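(* Let $r\ge 3$ and $1\le t\le r-2$ be integers. Let $\mathcal F\subseteq X_1\times\dots\times X_r$ be a non-trivial $t$-intersecting family that is $\ell$-shift-resistant for some $\ell\in[r]$. Then $|\bigcap\mathcal F|=t-1$, and there exists $x\in X_\ell\setminus\{1\}$ such that: $N_{\mathcal F}(x,\ell)\ne\emptyset$; $N_{\mathcal F}(1,\ell)\ne\emptyset$; for every $A\in N_{\mathcal F}(x,\ell)$, the sequence obtained from $A$ by replacing its $\ell$-th coordinate by $1$ does not belong to $\mathcal F$; and $N_{\mathcal F}(y,\ell)=\emptyset$ for every $y\in X_\ell\setminus\{1,x\}$.
   Context: Let $X_\ell=[n_\ell]$ for $1\le \ell\le r$, with $n_\ell\ge2$. For $A,B\in X_1\times\dots\times X_r$, write $A\cap B=\{\ell:A[\ell]=B[\ell]\}$ ($A[\ell]$ the $\ell$-th coordinate). $\mathcal F$ is $t$-intersecting if $|A\cap B|\ge t$ for all $A,B\in\mathcal F$; $\bigcap\mathcal F$ is the set of coordinates $\ell$ on which all members of $\mathcal F$ agree; a $t$-intersecting $\mathcal F$ is non-trivial if $|\bigcap\mathcal F|<t$ and trivial otherwise. For $1\le\ell\le r$ and $1<j\le n_\ell$, the shift $S^{(\ell)}_j$ acts on $F\in\mathcal F$ by: if $F[\ell]=j$ and the sequence $F'$ obtained from $F$ by replacing its $\ell$-th coordinate by $1$ is not in $\mathcal F$, then $S^{(\ell)}_j(F)=F'$; otherwise $S^{(\ell)}_j(F)=F$; and $S^{(\ell)}_j(\mathcal F)=\{S^{(\ell)}_j(F):F\in\mathcal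 F\}$. A non-trivial $t$-intersecting family $\mathcal F$ is $\ell$-shift-resistant if there exists $x\in X_\ell\setminus\{1\}$ such that $|\bigcap S^{(\ell)}_x(\mathcal F)|=t$. For $x\in X_\ell$, $N_{\mathcal F}(x,\ell)=\{A\in\mathcal F:A[\ell]=x\}$. *)

From HB Require Import structures.
From mathcomp Require Import all_boot all_order.
From mathcomp Require Import finmap.
Set Implicit Arguments. Unset Strict Implicit. Unset Printing Implicit Defensive.
Local Open Scope fset_scope.

(* A sequence A in X_1 x ... x X_r is a function 'I_r -> nat, whose value at
   coordinate l (0-based index for the paper's l+1) lies in [n_l] = {1..n_l}. *)
Definition sq (r : nat) := {ffun 'I_r -> nat}.

Definition in_prod (r : nat) (n : 'I_r -> nat) (A : sq r) : Prop :=
  forall i : 'I_r, 1 <= A i <= n i.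

Definition agree (r : nat) (A B : sq r) : {set 'I_r} := [set l | A l == B l].

Definition t_intersecting (r t : nat) (F : {fset sq r}) : Prop :=
  forall A B, A \in F -> B \in F -> t <= #|agree A B|.

Definition bigcapF (r : nat) (F : {fset sq r}) : {set 'I_r} :=
  [set l | [forall A : F, forall B : F, (val A) l == (val B) l]].

Definition nontrivial (r t : nat) (F : {fset sq r}) : Prop :=
  t_intersecting t F /\ #|bigcapF F| < t.

Definition repl (r : nat) (A : sq r) (l : 'I_r) (v : nat) : sq r :=
  [ffun i => if i == l then v else A i].

Definition shift_elt (r : nat) (l : 'I_r) (j : nat) (F : {fset sq r}) (A : sq r)
  : sq r :=
  if (A l == j) && (repl A l 1 \notin F) then repl A l 1 else A.

Definition shift (r : nat) (l : 'I_r) (j : nat) (F : {fset sq r}) : {fset sq r} :=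
  [fset shift_elt l j F A | A in F].

Definition shift_resistant (r t : nat) (n : 'I_r -> nat) (l : 'I_r)
  (F : {fset sq r}) : Prop :=
  nontrivial t F /\ exists x, 1 < x <= n l /\ #|bigcapF (shift l x F)| = t.

Definition nbhd (r : nat) (F : {fset sq r}) (x : nat) (l : 'I_r) : {fset sq r} :=
  [fset A in F | A l == x].

From mathcomp Require Import all_boot all_order.
From mathcomp Require Import finmap.
Set Implicit Arguments. Unset Strict Implicit. Unset Printing Implicit Defensive.
Local Open Scope fset_scope.

(* A shift only moves coordinate [l], so [F] and its shift have the same common
   coordinates apart from [l].  Since the shift has strictly more of them, [l]
   becomes common after shifting while it was not before, and [|⋂F| = t - 1].
   The common value at [l] of the shifted family must be [1]: otherwise no
   member moved, and [l] would already be common in [F].  Hence every member of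
   [F] has [l]-th coordinate [1], or has coordinate [x] and could not be
   shifted. *)

Lemma cardsD1_lt (T : finType) (a : T) (A B : {set T}) :
  A :\ a = B :\ a -> #|B| < #|A| -> [/\ a \in A, a \notin B & #|A| = #|B|.+1].
Proof.
move=> eqAB; rewrite (cardsD1 a A) (cardsD1 a B) eqAB ltn_add2r.
by case: (a \in A); case: (a \in B).
Qed.

Section CommonCoordinates.

Variable r : nat.
Implicit Types (F : {fset sq r}) (A B C : sq r) (l i : 'I_r).

Lemma bigcapP F i :
  reflect (forall A B, A \in F -> B \in F -> A i = B i) (i \in bigcapF F).
Proof.
rewrite /bigcapF inE; apply: (iffP forallP) => H.
- by move=> A B HA HB; move: (H [`HA]) => /forallP /(_ [`HB]) /eqP.
- by move=> A; apply/forallP => B; apply/eqP; apply: H; apply: fsvalP.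
Qed.

Lemma bigcapPn F i :
  i \notin bigcapF F -> exists A B, [/\ A \in F, B \in F & A i != B i].
Proof.
rewrite /bigcapF inE => /forallPn [[A HA] /forallPn [[B HB] /= neAB]].
by exists A, B.
Qed.

Lemma shift_eltE l j F A i :
  shift_elt l j F A i =
  if (A l == j) && (repl A l 1 \notin F) && (i == l) then 1 else A i.
Proof.
by rewrite /shift_elt; case: (_ && _) => //=; rewrite ffunE.
Qed.

Lemma shift_elt_at l j F A :
  shift_elt l j F A l = if (A l == j) && (repl A l 1 \notin F) then 1 else A l.
Proof. by rewrite shift_eltE eqxx andbT. Qed.

Lemma shift_elt_off l j F A i : i != l -> shift_elt l j F A i = A i.
Proof. by move=> /negbTE ne; rewrite shift_eltE ne andbF. Qed.

Lemma shift_elt_mem l j F A : A \in F -> shift_elt l j F A \in shift l j F.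
Proof. by move=> HA; apply/imfsetP; exists A. Qed.

Lemma bigcapF_shiftD1 l j F : bigcapF (shift l j F) :\ l = bigcapF F :\ l.
Proof.
apply/setP => i; rewrite !in_setD1; have [//|ne /=] := eqVneq i l.
apply/bigcapP/bigcapP => H.
- move=> A B HA HB.
  by move: (H _ _ (shift_elt_mem l j HA) (shift_elt_mem l j HB)); rewrite !shift_elt_off.
- move=> _ _ /imfsetP [A HA ->] /imfsetP [B HB ->].
  by rewrite !shift_elt_off //; apply: H.
Qed.

Lemma bigcapF_shift_coord l x F C :
  l \in bigcapF (shift l x F) -> l \notin bigcapF F -> C \in F ->
  C l = 1 \/ (C l = x /\ repl C l 1 \notin F).
Proof.
move=> /bigcapP Hsh /bigcapPn [A [B [HA HB neAB]]] HC.
have sameS D : D \in F -> shift_elt l x F D l = shift_elt l x F A l.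
  by move=> HD; apply: Hsh; apply: shift_elt_mem.
have shiftA1 : shift_elt l x F A l = 1.
  move: (sameS B HB); rewrite !shift_elt_at.
  by do 2!case: ifP => _ //; move=> eqBA; rewrite eqBA eqxx in neAB.
move: (sameS C HC); rewrite shiftA1 shift_elt_at.
by case: ifP => [/andP [/eqP -> ->] _ | _ ->]; [right | left].
Qed.

End CommonCoordinates.

Theorem lemma2p2 (r t : nat) (n : 'I_r -> nat) (F : {fset sq r}) (l : 'I_r) :
  3 <= r -> 1 <= t -> t <= r - 2 ->
  (forall i : 'I_r, 2 <= n i) ->
  (forall A, A \in F -> in_prod n A) ->
  t_intersecting t F -> nontrivial t F ->
  shift_resistant t n l F ->
  #|bigcapF F| = t - 1 /\
  exists x : nat, 1 < x <= n l /\
    nbhd F x l != fset0 /\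
    nbhd F 1 l != fset0 /\
    (forall A, A \in nbhd F x l -> repl A l 1 \notin F) /\
    (forall y : nat, 1 <= y <= n l -> y != 1 -> y != x -> nbhd F y l = fset0).
Proof.
move=> _ _ _ _ _ _ [_ ltFt] [_ [x [Hx cardS]]].
have ltFS : #|bigcapF F| < #|bigcapF (shift l x F)| by rewrite cardS.
have [lS lF cardSF] := cardsD1_lt (bigcapF_shiftD1 l x F) ltFS.
have coord := bigcapF_shift_coord lS lF.
have x1 : x != 1 by case/andP: Hx => /gtn_eqF ->.
split; first by rewrite -cardS cardSF subn1.
exists x; split=> //.
have [A [B [HA HB neAB]]] := bigcapPn lF.
have [Cx [C1 [HCx HC1 eCx eC1]]] :
    exists Cx C1, [/\ Cx \in F, C1 \in F, Cx l = x & C1 l = 1].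
  case: (coord A HA) => [eA|[eA _]]; case: (coord B HB) => [eB|[eB _]];
    rewrite eA eB ?eqxx // in neAB; [by exists B, A | by exists A, B].
split; first by apply/fset0Pn; exists Cx; rewrite !inE HCx eCx eqxx.
split; first by apply/fset0Pn; exists C1; rewrite !inE HC1 eC1 eqxx.
split.
  move=> C; rewrite !inE => /andP [HC /eqP eC].
  by case: (coord C HC) => [e|[]//]; rewrite -eC e eqxx in x1.
move=> y _ y1 yx; apply/fsetP => C; rewrite !inE.
apply/negbTE/andP => -[HC /eqP eC].
by case: (coord C HC) => [|[]] e; rewrite -eC e eqxx in y1 yx.
Qed.
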